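(* Let $K$ be algebraically closed, $G$ a (not necessarily connected) reductive group over $K$ with identity component $G^\circ$, and $V$ a rational representation of $G$. Then $\sigma(G,V)\ge\sigma(G^\circ,V)$.
   Context: For a reductive group $R$ acting on $V$, the null cone is the common zero set of all non-constant homogeneous elements of $K[V]^R$, and $\sigma(R,V)$ is the smallest $D$ such that the homogeneous invariants of degrees $1,\dots,D$ have common zero set equal to the null cone. *)

From HB Require Import structures.
From mathcomp Require Import all_boot all_order all_algebra.
From mathcomp Require Import mpoly.
Set Implicit Arguments. Unset Strict Implicit. Unset Printing Implicit Defensive.
Import Order.TTheory GRing.Theory Num.Theory.
Local Open Scope ring_scope.

Section LinAlgGroups.
Variable K : closedFieldType.

Definition mxset (n : nat) := 'M[K]_n -> Prop.

Definition mxeval (n : nat) (f : {mpoly K[n * n]}) (g : 'M[K]_n) : K :=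
  f.@[fun i => mxvec g 0 i].

Definition GLn (n : nat) : mxset n := fun g => g \in unitmx.

(* Since GL_n is the principal open set
   D(det) of M_n, its closed subsets are exactly the intersections of GL_n
   with zero sets of polynomials in the matrix entries. *)
Definition Zclosed (n : nat) (A : mxset n) : Prop :=
  exists S : {mpoly K[n * n]} -> Prop,
    forall g, A g <-> (GLn g /\ forall f, S f -> mxeval f g = 0).

Definition Zirreducible (n : nat) (A : mxset n) : Prop :=
  (exists g, A g) /\ (forall g, A g -> GLn g) /\
  forall Z1 Z2 : mxset n, Zclosed Z1 -> Zclosed Z2 ->
    (forall g, A g -> Z1 g \/ Z2 g) ->
    (forall g, A g -> Z1 g) \/ (forall g, A g -> Z2 g).

Definition is_subgroup (n : nat) (G : mxset n) : Prop :=
  (forall g, G g -> GLn g) /\ G 1%:M /\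
  (forall g h, G g -> G h -> G (g *m h)) /\ (forall g, G g -> G (invmx g)).

Definition is_alg_group (n : nat) (G : mxset n) : Prop :=
  is_subgroup G /\ Zclosed G.

(* Identity component G° : the union of all irreducible subsets of G
   containing the identity (= the irreducible component of G through 1). *)
Definition identity_component (n : nat) (G : mxset n) : mxset n :=
  fun g => exists Z : mxset n,
    (forall x, Z x -> G x) /\ Zirreducible Z /\ Z 1%:M /\ Z g.

Definition unipotent (n : nat) (g : 'M[K]_n) : Prop :=
  exists k : nat, (g - 1%:M) ^+ k = 0.

(* Reductive (not necessarily connected): the unipotent radical is trivial,
   i.e. every closed connected (= irreducible) normal subgroup of G all of
   whose elements are unipotent is trivial. *)
Definition is_reductive (n : nat) (G : mxset n) : Prop :=
  is_alg_group G /\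
  forall N : mxset n,
    is_subgroup N -> Zclosed N -> Zirreducible N ->
    (forall x, N x -> G x) ->
    (forall g x, G g -> N x -> N (invmx g *m x *m g)) ->
    (forall x, N x -> unipotent x) ->
    forall x, N x -> x = 1%:M.

(* A rational representation of G on V = K^m (column vectors): a group
   homomorphism G -> GL_m whose entries are regular functions on G,
   i.e. of the form P(g) / det(g)^k with P polynomial in the entries. *)
Definition is_rational_rep (n m : nat) (G : mxset n)
    (rho : 'M[K]_n -> 'M[K]_m) : Prop :=
  (forall g, G g -> rho g \in unitmx) /\
  (forall g h, G g -> G h -> rho (g *m h) = rho g *m rho h) /\
  exists (k : nat) (P : 'I_m -> 'I_m -> {mpoly K[n * n]}),
    forall g, G g -> forall i j, rho g i j = mxeval (P i j) g / (\det g) ^+ k.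

Definition veval (m : nat) (f : {mpoly K[m]}) (v : 'cV[K]_m) : K :=
  f.@[fun i => v i 0].

Definition is_invariant (n m : nat) (R : mxset n) (rho : 'M[K]_n -> 'M[K]_m)
    (f : {mpoly K[m]}) : Prop :=
  forall g, R g -> forall v : 'cV[K]_m, veval f (rho g *m v) = veval f v.

Definition inv_zero_set (n m : nat) (R : mxset n) (rho : 'M[K]_n -> 'M[K]_m)
    (hi : option nat) (v : 'cV[K]_m) : Prop :=
  forall (d : nat) (f : {mpoly K[m]}),
    (1 <= d)%N -> (if hi is Some D then (d <= D)%N else true) ->
    f \is d.-homog -> is_invariant R rho f -> veval f v = 0.

Definition null_cone (n m : nat) (R : mxset n) (rho : 'M[K]_n -> 'M[K]_m)
  : 'cV[K]_m -> Prop := inv_zero_set R rho None.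

Definition cuts_null_cone (n m : nat) (R : mxset n) (rho : 'M[K]_n -> 'M[K]_m)
    (D : nat) : Prop :=
  forall v, inv_zero_set R rho (Some D) v <-> null_cone R rho v.

Definition is_sigma (n m : nat) (R : mxset n) (rho : 'M[K]_n -> 'M[K]_m)
    (D : nat) : Prop :=
  cuts_null_cone R rho D /\
  forall D', cuts_null_cone R rho D' -> (D <= D')%N.

End LinAlgGroups.

From HB Require Import structures.
From mathcomp Require Import all_boot all_order all_algebra.
From mathcomp Require Import mpoly.
From Stdlib Require Import Classical ClassicalEpsilon.
Set Implicit Arguments. Unset Strict Implicit. Unset Printing Implicit Defensive.
Import Order.TTheory GRing.Theory Num.Theory.
Local Open Scope ring_scope.

(* The heart of the matter is that G and G° have the same null cone.  One
   inclusion is trivial (G-invariants are G°-invariants).  For the other, G°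
   has finite index in G, so a homogeneous G°-invariant f has only finitely
   many distinct translates f(rho(h) _); G permutes them, so the elementary
   symmetric functions of the translates are G-invariants of positive degree
   and vanish on the null cone of G, which forces every translate, f included,
   to vanish there.  Then the G°-invariants of degree <= sigma(G, V) cut out
   the null cone of G°, whence the bound. *)

Section Dickson.
Variable N : nat.

Definition mnm_basis (M : 'X_{1..N} -> Prop) (F : seq 'X_{1..N}) : Prop :=
  (forall f, f \in F -> M f) /\ forall m, M m -> exists2 f, f \in F & (f <= m)%MM.

(* Let the monomials of M agree outside the
   coordinates S, and pick a \in M.  A monomial of M not above a lies below a in
   some coordinate i \in S, hence in one of the finitely many slices
   {m \in M | m i = c}, c < a i; these agree outside S :\ i and have a basis. *)
Lemma dickson_step (S : {set 'I_N}) (M : 'X_{1..N} -> Prop) :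
  (forall i, i \in S -> forall M' : 'X_{1..N} -> Prop,
     (forall m m', M' m -> M' m' -> forall j, j \notin S :\ i -> m j = m' j) ->
     exists F, mnm_basis M' F) ->
  (forall m m', M m -> M m' -> forall i, i \notin S -> m i = m' i) ->
  exists F, mnm_basis M F.
Proof.
move=> slice_basis fixed.
have [[a Ma]|noM] := classic (exists a, M a); last first.
  by exists [::]; split=> // m Mm; case: noM; exists m.
pose slice i c m := M m /\ m i = c.
have [B HB] : exists B : 'I_N * nat -> seq 'X_{1..N},
    forall ic, ic.1 \in S -> mnm_basis (slice ic.1 ic.2) (B ic).
  apply: (choice (fun ic F => ic.1 \in S -> mnm_basis (slice ic.1 ic.2) F)).
  case=> i c; have [iS|_] := boolP (i \in S); last by exists [::].
  have [|F HF] := slice_basis i iS (slice i c); last by exists F.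
  move=> m m' [Mm <-] [Mm' mi'] j; rewrite in_setD1 negb_and negbK.
  by case/orP => [/eqP -> //|]; exact: fixed.
exists (a :: flatten [seq B (i, c) | i <- enum S, c <- iota 0 (a i)]); split.
  move=> f; rewrite inE => /predU1P [-> //|/flattenP [s]].
  case/allpairsPdep => i [c [iS _ ->]] fB.
  by rewrite mem_enum in iS; case: (HB (i, c) iS) => /(_ f fB) [].
move=> m Mm; have [am|am] := boolP (a <= m)%MM; first by exists a; rewrite ?mem_head.
have [i lt_mi] : exists i, (m i < a i)%N.
  apply: NNPP => H; move/negP: am; apply; apply/mnm_lepP => i.
  by rewrite leqNgt; apply/negP => lt; apply: H; exists i.
have iS : i \in S.
  by apply: contraLR lt_mi => iS; rewrite (fixed a m Ma Mm i iS) ltnn.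
have [_ /(_ m (conj Mm erefl)) [f fB fm]] := HB (i, m i) iS.
exists f; rewrite // inE; apply/orP; right; apply/flattenP.
exists (B (i, m i)) => //; apply/allpairsPdep.
by exists i, (m i); rewrite mem_enum mem_iota.
Qed.

Lemma dickson (M : 'X_{1..N} -> Prop) : exists F, mnm_basis M F.
Proof.
(* induction on a bound k for the number of coordinates in which M varies *)
suff: forall k (S : {set 'I_N}) (M' : 'X_{1..N} -> Prop), (#|S| <= k)%N ->
    (forall m m', M' m -> M' m' -> forall i, i \notin S -> m i = m' i) ->
    exists F, mnm_basis M' F.
  by move/(_ _ setT M (leqnn _)); apply=> m m' _ _ i; rewrite inE.
elim=> [|k IH] S M' cardS fixed; apply: dickson_step fixed => i iS.
  by move: cardS; rewrite leqn0 cards_eq0 => /eqP S0; rewrite S0 inE in iS.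
move=> M'' fixed''; apply: (IH (S :\ i)) fixed''.
by move: cardS; rewrite (cardsD1 i S) iS.
Qed.

End Dickson.

Section ZeroBasis.
Variables (K : fieldType) (N : nat).

Lemma lead_reduction (p g : {mpoly K[N]}) :
  p != 0 -> g != 0 -> (mlead g <= mlead p)%MM ->
  let q := p - (mleadc p / mleadc g) *: (g * 'X_[mlead p - mlead g]) in
  q = 0 \/ (mlead q < mlead p)%O.
Proof.
move=> p0 g0 le q.
set m := mlead p; set f := mlead g; set c := mleadc p / mleadc g.
have gc : mleadc g != 0 by rewrite mleadc_eq0.
have Em : (m - f + f = m)%MM by rewrite submK.
have tm : (c *: (g * 'X_[m - f]))@_m = mleadc p.
  rewrite mcoeffZ; have := mcoeffMX g (m - f) f; rewrite Em => ->.
  by rewrite /c -mulrA mulVf // mulr1.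
have qm : q@_m = 0 by rewrite /q mcoeffB tm subrr.
have tle : (mlead (c *: (g * 'X_[m - f])) <= m)%O.
  apply: le_trans (mleadZ_le _ _) _; apply: le_trans (mleadM_le _ _) _.
  by rewrite mleadXm addmC Em.
have qle : (mlead q <= m)%O.
  by apply: le_trans (mleadB_le _ _) _; rewrite leUx lexx tle.
have [->|q0] := eqVneq q 0; [by left | right].
rewrite lt_neqAle qle andbT; apply/eqP => E.
by move: (mleadc_eq0 q); rewrite E qm eqxx (negbTE q0).
Qed.

(* Take for each monomial of a Dickson basis of the leading monomials of I a
   member of I with that leading monomial; any p \in I is then reduced to 0
   by these members, by well-founded induction on its leading monomial. *)
Lemma ideal_zero_basis (I : {mpoly K[N]} -> Prop) :
  (forall p q, I p -> I q -> I (p - q)) ->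
  (forall p q, I q -> I (p * q)) ->
  exists gs : seq {mpoly K[N]}, (forall g, g \in gs -> I g) /\
    forall v : 'I_N -> K, (forall g, g \in gs -> g.@[v] = 0) ->
      forall p, I p -> p.@[v] = 0.
Proof.
move=> IB IM.
pose lead_of_I m := exists p, [/\ I p, p != 0 & mlead p = m].
have [F [FI Fbasis]] := dickson lead_of_I.
have [W HW] : exists W : 'X_{1..N} -> {mpoly K[N]},
    forall m, lead_of_I m -> [/\ I (W m), W m != 0 & mlead (W m) = m].
  apply: (choice (fun m p => lead_of_I m -> [/\ I p, p != 0 & mlead p = m])).
  by move=> m; have [[p Hp]|nM] := classic (lead_of_I m); [exists p | exists 0].
exists (map W F); split; first by move=> g /mapP [f /FI /HW [] ? _ _ ->].
move=> v Wv p Ip; move: {2}(mlead p) (erefl (mlead p)) => m Em.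
elim/(well_founded_induction (@ltom_wf N)): m p Ip Em => m IH p Ip Em.
have [->|p0] := eqVneq p 0; first by rewrite meval0.
have [f fF fm] := Fbasis m (ex_intro _ p (And3 Ip p0 Em)).
have [Ig g0 Eg] := HW f (FI f fF).
have le_lead : (mlead (W f) <= mlead p)%MM by rewrite Eg Em.
have := lead_reduction p0 g0 le_lead.
set c := mleadc p / mleadc (W f); set q := p - _ => reduced.
have Iq : I q by apply: IB => //; rewrite -mul_mpolyC (mulrC (W f)) mulrA; exact: IM.
have qv : q.@[v] = 0.
  case: reduced => [->|lt]; first by rewrite meval0.
  by apply: (IH (mlead q)) => //; rewrite -Em.
rewrite -(subrK (c *: (W f * 'X_[mlead p - mlead (W f)])) p) -/q.
by rewrite mevalD qv add0r mevalZ mevalM Wv ?mul0r ?mulr0 // map_f.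
Qed.

End ZeroBasis.

Section Noetherian.
Variables (K : closedFieldType) (n : nat).

Definition decreasing (A : nat -> mxset K n) : Prop :=
  forall k x, A k.+1 x -> A k x.

Lemma decreasing_le (A : nat -> mxset K n) : decreasing A ->
  forall k k' x, (k <= k')%N -> A k' x -> A k x.
Proof.
move=> decA k k' x /subnK <-; elim: (k' - k)%N => [//|j IHj] Ax.
by apply: IHj; apply: decA; rewrite -addSn.
Qed.

Lemma vanish_on_common_member (A : nat -> mxset K n) (gs : seq {mpoly K[n * n]}) :
  decreasing A -> (forall g, g \in gs -> exists k, forall x, A k x -> mxeval g x = 0) ->
  exists k0, forall g, g \in gs -> forall x, A k0 x -> mxeval g x = 0.
Proof.
move=> decA; elim: gs => [|g gs IHgs] gsA; first by exists 0%N.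
have [k1 H1] := gsA g (mem_head _ _).
have [|k2 H2] := IHgs; first by move=> h hgs; apply: gsA; rewrite inE hgs orbT.
exists (maxn k1 k2) => h; rewrite inE => /predU1P [-> | hgs] x Ax.
  by apply: H1; apply: decreasing_le Ax; rewrite ?leq_maxl.
by apply: H2 => //; apply: decreasing_le Ax; rewrite ?leq_maxr.
Qed.

(* The polynomials vanishing on some member of the chain form an
   ideal, whose finite zero basis vanishes on a single member A k0; the zero
   set of that ideal then contains A k0 and is contained in A k0.+1. *)
Lemma no_strict_chain (A : nat -> mxset K n) :
  (forall k, Zclosed (A k)) -> decreasing A ->
  ~ (forall k, exists x, A k x /\ ~ A k.+1 x).
Proof.
move=> Acl decA strict.
pose I (f : {mpoly K[n * n]}) := exists k, forall g, A k g -> mxeval f g = 0.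
have I_sub p q : I p -> I q -> I (p - q).
  move=> [k1 H1] [k2 H2]; exists (maxn k1 k2) => g Ag.
  rewrite /mxeval mevalB -/(mxeval p g) -/(mxeval q g) H1 ?H2 ?subrr //.
    by apply: decreasing_le Ag; rewrite ?leq_maxr.
  by apply: decreasing_le Ag; rewrite ?leq_maxl.
have I_mul p q : I q -> I (p * q).
  by move=> [k H]; exists k => g Ag; rewrite /mxeval mevalM -/(mxeval q g) H // mulr0.
have [gs [gsI gs_zero]] := ideal_zero_basis I_sub I_mul.
have [k0 Hk0] := vanish_on_common_member decA gsI.
have [x [Ax nAx]] := strict k0; apply: nAx.
have [S HS] := Acl k0.+1; have [S0 HS0] := Acl k0.
apply/HS; split; first by case: (HS0 x).1.
move=> f Sf; apply: gs_zero; first by move=> g gg; exact: Hk0.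
by exists k0.+1 => g /HS [_]; apply.
Qed.

Definition irreducible_cover (A : mxset K n) : Prop :=
  exists (k : nat) (Z : nat -> mxset K n),
    (forall i, (i < k)%N -> Zirreducible (Z i) /\ forall x, Z i x -> A x) /\
    forall x, A x -> exists2 i, (i < k)%N & Z i x.

Lemma Zclosed_inter (A B : mxset K n) :
  Zclosed A -> Zclosed B -> Zclosed (fun x => A x /\ B x).
Proof.
move=> [SA HA] [SB HB]; exists (fun f => SA f \/ SB f) => g; split.
  case=> /HA [Gg HAg] /HB [_ HBg]; split => // f [] ?; [exact: HAg | exact: HBg].
case=> Gg Hg; split; [apply/HA | apply/HB]; split => // f Sf; apply: Hg; tauto.
Qed.

Lemma irreducible_cover_union (A Z1 Z2 : mxset K n) :
  (forall x, A x -> Z1 x \/ Z2 x) ->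
  irreducible_cover (fun x => A x /\ Z1 x) -> irreducible_cover (fun x => A x /\ Z2 x) ->
  irreducible_cover A.
Proof.
move=> cov [k1 [W1 [H1 C1]]] [k2 [W2 [H2 C2]]].
exists (k1 + k2)%N, (fun i => if (i < k1)%N then W1 i else W2 (i - k1)%N); split.
  move=> i ik; case: ifP => ik1; first by case: (H1 i ik1) => ? H; split=> // x /H [].
  have : (i - k1 < k2)%N by rewrite ltn_subLR // leqNgt ik1.
  by move=> /H2 [? H]; split=> // x /H [].
move=> x Ax; case: (cov x Ax) => Zx.
  by case: (C1 x (conj Ax Zx)) => i ik Wx; exists i; rewrite ?ik ?ltn_addr.
case: (C2 x (conj Ax Zx)) => i ik Wx; exists (k1 + i)%N; first by rewrite ltn_add2l.
by rewrite ltnNge leq_addr /= addKn.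
Qed.

(* A closed set that is not a finite union of irreducibles contains a strictly
   smaller closed set with the same defect: such a set is nonempty and
   reducible, and one of its two closed pieces must inherit the defect. *)
Lemma not_cover_shrinks (A : mxset K n) : Zclosed A -> ~ irreducible_cover A ->
  exists B : mxset K n, [/\ Zclosed B, ~ irreducible_cover B,
     (forall x, B x -> A x) & exists x, A x /\ ~ B x].
Proof.
move=> Acl nA.
have [Ane|Ae] := classic (exists x, A x); last first.
  by case: nA; exists 0%N, (fun _ => A); split=> // x Ax; case: Ae; exists x.
have AGL : forall g, A g -> GLn g by case: Acl => S HS g /HS [].
have [Air|nir] := classic (Zirreducible A).
  by case: nA; exists 1%N, (fun _ => A); split => // x Ax; exists 0%N.
have [Z1 [Z2 [[Z1c Z2c cov] [n1 n2]]]] : exists Z1 Z2 : mxset K n,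
    [/\ Zclosed Z1, Zclosed Z2 & (forall g, A g -> Z1 g \/ Z2 g)] /\
    ~ (forall g, A g -> Z1 g) /\ ~ (forall g, A g -> Z2 g).
  apply: NNPP => H; apply: nir; split => //; split => // Z1 Z2 c1 c2 cov.
  by apply: NNPP => H2; apply: H; exists Z1, Z2; split => //; tauto.
have [good1|bad1] := classic (irreducible_cover (fun x => A x /\ Z1 x)).
  have [good2|bad2] := classic (irreducible_cover (fun x => A x /\ Z2 x)).
    by case: nA; exact: irreducible_cover_union good1 good2.
  exists (fun x => A x /\ Z2 x); split => //; [exact: Zclosed_inter | by move=> x [] |].
  by apply: NNPP => H; apply: n2 => g Ag; apply: NNPP => nZ; apply: H; exists g; split => // -[].
exists (fun x => A x /\ Z1 x); split => //; [exact: Zclosed_inter | by move=> x [] |].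
by apply: NNPP => H; apply: n1 => g Ag; apply: NNPP => nZ; apply: H; exists g; split => // -[].
Qed.

(* Every closed subset of GL_n is a finite union of irreducible subsets:
   otherwise not_cover_shrinks builds a strictly decreasing chain. *)
Lemma closed_irreducible_cover (A : mxset K n) : Zclosed A -> irreducible_cover A.
Proof.
move=> Acl; apply: NNPP => nA.
pose T := {B : mxset K n | Zclosed B /\ ~ irreducible_cover B}.
have [next Hnext] : exists next : T -> T, forall t,
    (forall x, sval (next t) x -> sval t x) /\ exists x, sval t x /\ ~ sval (next t) x.
  apply: (choice (fun t t' : T => (forall x, sval t' x -> sval t x) /\
                                  exists x, sval t x /\ ~ sval t' x)).
  move=> [B [Bc nB]] /=.
  have [B' [B'c nB' sub strict]] := not_cover_shrinks Bc nB.
  by exists (exist _ B' (conj B'c nB')).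
pose chain := fix chain k : T := if k is k'.+1 then next (chain k') else exist _ A (conj Acl nA).
apply: (@no_strict_chain (fun k => sval (chain k))).
- by move=> k; case: (chain k) => B [].
- by move=> k x /=; case: (Hnext (chain k)) => H _; apply: H.
- by move=> k /=; case: (Hnext (chain k)).
Qed.

End Noetherian.

Section RightTranslation.
Variables (K : closedFieldType) (n : nat).

Definition genmx : 'M[{mpoly K[n * n]}]_n := \matrix_(i, j) 'X_(mxvec_index i j).

Definition rmul_subst (a : 'M[K]_n) : (n * n).-tuple {mpoly K[n * n]} :=
  [tuple mxvec (genmx *m map_mx (fun c => c%:MP) a) 0 k | k < n * n].

Lemma mxeval_rmul (a : 'M[K]_n) f z :
  mxeval (f \mPo rmul_subst a) z = mxeval f (z *m a).
Proof.
rewrite /mxeval comp_mpoly_meval; apply: meval_eq => k; rewrite tnth_mktuple.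
set v := (fun i => mxvec z 0 i).
have -> : (mxvec (genmx *m map_mx (fun c => c%:MP) a) 0 k).@[v] =
    mxvec (map_mx (meval v) (genmx *m map_mx (fun c => c%:MP) a)) 0 k.
  by rewrite -map_mxvec mxE.
rewrite map_mxM; congr (mxvec (_ *m _) 0 k).
  apply/matrixP => i j; rewrite !mxE.
  by transitivity (v (mxvec_index i j)); [exact: mevalXU | exact: mxvecE].
by apply/matrixP => i j; rewrite !mxE; exact: mevalC.
Qed.

Lemma Zclosed_rmul (a : 'M[K]_n) (Z : mxset K n) : a \in unitmx -> Zclosed Z ->
  Zclosed (fun z => Z (z *m a)).
Proof.
move=> au [S HS].
exists (fun f' => exists2 f, S f & f' = f \mPo rmul_subst a) => z; split.
  move=> /HS [Gz Hz]; split; first by move: Gz; rewrite /GLn unitmx_mul => /andP [].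
  by move=> f' [f Sf ->]; rewrite mxeval_rmul; apply: Hz.
move=> [Gz Hz]; apply/HS; split; first by rewrite /GLn unitmx_mul Gz.
by move=> f Sf; rewrite -mxeval_rmul; apply: Hz; exists f.
Qed.

Lemma Zirreducible_rmul (h : 'M[K]_n) (Z : mxset K n) : h \in unitmx ->
  Zirreducible Z -> Zirreducible (fun y => Z (y *m h)).
Proof.
move=> hu [[z Zz] [ZG Zsplit]]; split; first by exists (z *m invmx h); rewrite mulmxKV.
split; first by move=> y /ZG; rewrite /GLn unitmx_mul => /andP [].
move=> Z1 Z2 c1 c2 cov; have hiu : invmx h \in unitmx by rewrite unitmx_inv.
have cov' g : Z g -> Z1 (g *m invmx h) \/ Z2 (g *m invmx h).
  by move=> Zg; apply: cov; rewrite mulmxKV.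
have [H|H] := Zsplit _ _ (Zclosed_rmul hiu c1) (Zclosed_rmul hiu c2) cov'.
  by left => y /H; rewrite mulmxK.
by right => y /H; rewrite mulmxK.
Qed.

(* If G = Z_0 \cup ... \cup Z_(k-1) with Z_i irreducible and
   h_i \in Z_i, then Z_i h_i^-1 is an irreducible subset of G through 1. *)
Lemma identity_component_finite_index (G : mxset K n) : is_subgroup G -> Zclosed G ->
  exists (k : nat) (h : nat -> 'M[K]_n), (forall i, (i < k)%N -> G (h i)) /\
    forall g, G g -> exists2 i, (i < k)%N & identity_component G (g *m invmx (h i)).
Proof.
move=> [GGL [_ [GM GV]]] Gcl.
have [k [Z [HZ cov]]] := closed_irreducible_cover Gcl.
have [h Hh] : exists h : nat -> 'M[K]_n, forall i, (i < k)%N -> Z i (h i).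
  apply: (choice (fun i x => (i < k)%N -> Z i x)) => i.
  have [ik|_] := boolP (i < k)%N; last by exists 1%:M.
  by case: (HZ i ik) => [[[x Zx] _] _]; exists x.
have hG i : (i < k)%N -> G (h i) by move=> ik; case: (HZ i ik) => _; apply; exact: Hh.
exists k, h; split => // g Gg; have [i ik Zg] := cov g Gg; exists i => //.
have hu : h i \in unitmx := GGL _ (hG i ik).
have [Zirr ZG] := HZ i ik.
exists (fun x => Z i (x *m h i)); split.
  by move=> x Zx; rewrite -(mulmxK hu x); apply: GM (GV _ (hG i ik)); exact: ZG.
split; first exact: Zirreducible_rmul.
by rewrite mul1mx mulmxKV //; split => //; exact: Hh.
Qed.

End RightTranslation.

Lemma comp_dhomog (R : comRingType) (k m : nat) (p : {mpoly R[k]})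
    (t : k.-tuple {mpoly R[m]}) (e d : nat) :
  p \is e.-homog -> (forall j, tnth t j \is d.-homog) -> p \mPo t \is (e * d)%N.-homog.
Proof.
move=> hp ht; rewrite comp_mpolyEX big_seq; apply: rpred_sum => mm mmS.
apply: dhomogZ; rewrite comp_mpolyX.
have -> : (e * d = \sum_(i < k) d * mm i)%N.
  by rewrite -big_distrr /= -mdegE (dhomog_mf hp mmS) mulnC.
apply: (big_ind2 (fun q e => q \is e.-homog)); [exact: dhomog1 | | ].
  by move=> q1 e1 q2 e2; exact: dhomogM.
by move=> i _; exact: dhomogMn.
Qed.

Section LinearSubstitution.
Variables (K : closedFieldType) (m : nat).

Definition lin_subst (M : 'M[K]_m) : m.-tuple {mpoly K[m]} :=
  [tuple \sum_j M i j *: 'X_j | i < m].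

Lemma veval_lin_subst (M : 'M[K]_m) f w :
  veval (f \mPo lin_subst M) w = veval f (M *m w).
Proof.
rewrite /veval comp_mpoly_meval; apply: meval_eq => i.
rewrite tnth_mktuple mxE raddf_sum /=; apply: eq_bigr => j _.
by rewrite mevalZ mevalXU.
Qed.

Lemma lin_subst_homog (M : 'M[K]_m) j : tnth (lin_subst M) j \is 1.-homog.
Proof.
rewrite tnth_mktuple; apply: rpred_sum => i _; apply: dhomogZ.
by rewrite dhomogX; apply/eqP; exact: mdeg1.
Qed.

End LinearSubstitution.

Lemma representatives (T : eqType) (E : T -> T -> Prop) (L : seq T) :
  (forall x, E x x) -> (forall x y, E x y -> E y x) ->
  exists (k : nat) (t : k.-tuple T), [/\ forall j, tnth t j \in L,
    forall x, x \in L -> exists j, E x (tnth t j) &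
    forall j1 j2, E (tnth t j1) (tnth t j2) -> j1 = j2].
Proof.
move=> Erefl Esym.
have [L' [L'L LL' uL' L'E]] : exists L' : seq T, [/\ {subset L' <= L},
    forall x, x \in L -> exists2 y, y \in L' & E x y, uniq L' &
    forall x y, x \in L' -> y \in L' -> E x y -> x = y].
  elim: L => [|x L [L' [L'L LL' uL' L'E]]]; first by exists [::]; split.
  have [[y yL' Exy]|new] := classic (exists2 y, y \in L' & E x y).
    exists L'; split => //; first by move=> z /L'L; rewrite inE orbC => ->.
    by move=> z; rewrite inE => /predU1P [-> | /LL'] //; exists y.
  have xL' : x \notin L' by apply/negP => xL'; apply: new; exists x.
  exists (x :: L'); split; rewrite /= ?xL' //.
  - by move=> z; rewrite !inE => /predU1P [-> | /L'L ->]; rewrite ?eqxx ?orbT.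
  - move=> z; rewrite inE => /predU1P [-> | /LL' [y yL' Ezy]]; first by exists x; rewrite ?mem_head.
    by exists y; rewrite // inE yL' orbT.
  - move=> y z; rewrite !inE => /predU1P [-> | yL'] /predU1P [-> | zL'] // E'.
    + by case: new; exists z.
    + by case: new; exists y; last exact: Esym.
    + exact: L'E.
exists (size L'), (in_tuple L'); split.
- by move=> j; apply/L'L/mem_tnth.
- move=> x /LL' [y yL' Exy]; have /tnthP [j Ey] : y \in in_tuple L' by [].
  by exists j; rewrite -Ey.
- by move=> j1 j2 E12; apply/(tuple_uniqP (in_tuple L') uL')/L'E => //; apply: mem_tnth.
Qed.

Section FiniteOrbit.
Variables (K : closedFieldType) (n m : nat) (R : mxset K n) (rho : 'M[K]_n -> 'M[K]_m).
Hypothesis rho_unit : forall g, R g -> rho g \in unitmx.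

Variables (k d : nat) (t : k.-tuple {mpoly K[m]}).
Hypothesis d_pos : (0 < d)%N.
Hypothesis t_homog : forall j, tnth t j \is d.-homog.
Hypothesis t_distinct :
  forall j1 j2, (forall w, veval (tnth t j1) w = veval (tnth t j2) w) -> j1 = j2.
Hypothesis t_stable : forall g, R g -> forall j, exists j',
  forall w, veval (tnth t j) (rho g *m w) = veval (tnth t j') w.

Definition orbit_values (w : 'cV[K]_m) : k.-tuple K := [tuple veval (tnth t j) w | j < k].
Definition orbit_poly (w : 'cV[K]_m) : {poly K} := \prod_(c <- orbit_values w) ('X - c%:P).

(* R permutes the family, hence fixes the polynomial of its values: the map
   j |-> j' is injective because rho g is invertible. *)
Lemma orbit_poly_invariant g w : R g -> orbit_poly (rho g *m w) = orbit_poly w.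
Proof.
move=> Rg; have [s Hs] := choice (fun j j' => forall w,
  veval (tnth t j) (rho g *m w) = veval (tnth t j') w) (t_stable Rg).
have s_inj : injective s.
  move=> j1 j2 sj; apply: t_distinct => w'.
  have <- : rho g *m (invmx (rho g) *m w') = w' by rewrite mulKVmx ?rho_unit.
  by rewrite !Hs sj.
rewrite /orbit_poly !big_tuple [RHS](reindex_inj s_inj) /=; apply: eq_bigr => j _.
by rewrite !tnth_mktuple Hs.
Qed.

Definition orbit_esym (i : nat) : {mpoly K[m]} := mesym k K i \mPo t.

Lemma orbit_poly_coef w (i : 'I_k.+1) :
  (orbit_poly w)`_(k - i) = (-1) ^+ i * veval (orbit_esym i) w.
Proof.
rewrite /orbit_poly mroots_coeff /veval comp_mpoly_meval; congr (_ * _).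
by apply: meval_eq => j; rewrite !tnth_mktuple.
Qed.

Lemma orbit_esym_invariant (i : 'I_k.+1) : is_invariant R rho (orbit_esym i).
Proof.
move=> g Rg w; have := orbit_poly_coef (rho g *m w) i.
rewrite orbit_poly_invariant // orbit_poly_coef.
by move/(congr1 ( *%R ((-1) ^+ i))); rewrite !signrMK.
Qed.

(* On the null cone of R all these invariants vanish, so the polynomial of
   values is X^k and every member of the family vanishes. *)
Lemma orbit_vanishes_on_null_cone v : null_cone R rho v ->
  forall j, veval (tnth t j) v = 0.
Proof.
move=> Nv j.
have esym0 (i : 'I_k.+1) : (0 < i)%N -> veval (orbit_esym i) v = 0.
  move=> i_pos; apply: (Nv (i * d)%N); rewrite ?muln_gt0 ?i_pos //.
    by apply: comp_dhomog => //; exact: dhomog_mesym.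
  exact: orbit_esym_invariant.
have Pv : orbit_poly v = 'X^k.
  apply/polyP => l; rewrite coefXn; case: (ltngtP l k) => lk.
  - have ik : (k - l < k.+1)%N by rewrite ltnS leq_subr.
    have := orbit_poly_coef v (Ordinal ik); rewrite /= subKn ?(ltnW lk) // => ->.
    by rewrite (esym0 (Ordinal ik)) ?mulr0 //= subn_gt0.
  - by rewrite nth_default // size_prod_XsubC size_tuple.
  - rewrite lk; have /monicP := monic_prod_XsubC (orbit_values v) predT id.
    by rewrite lead_coefE size_prod_XsubC size_tuple.
have : root (orbit_poly v) (veval (tnth t j) v).
  by rewrite root_prod_XsubC; apply/tnthP; exists j; rewrite tnth_mktuple.
by rewrite Pv /root hornerXn expf_eq0 => /andP [_ /eqP].
Qed.

End FiniteOrbit.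

Section NullCone.
Variables (K : closedFieldType) (n m : nat) (G : mxset K n) (rho : 'M[K]_n -> 'M[K]_m).
Hypothesis Gsub : is_subgroup G.
Hypothesis Gcl : Zclosed G.
Hypothesis rho_unit : forall g, G g -> rho g \in unitmx.
Hypothesis rhoM : forall g h, G g -> G h -> rho (g *m h) = rho g *m rho h.

Lemma rho1 : rho 1%:M = 1%:M.
Proof.
have [_ [G1 _]] := Gsub; have u := rho_unit G1.
have idem : rho 1%:M *m rho 1%:M = rho 1%:M by rewrite -rhoM // mul1mx.
by rewrite -[LHS](mulmxK u) idem mulmxV.
Qed.

(* A homogeneous G°-invariant f of positive degree has only finitely many
   translates w |-> f(rho h_i w), one per coset of G°; G permutes them, so they
   vanish on the null cone of G, and f is one of them (h = 1). *)
Lemma null_cone_identity_component v :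
  null_cone G rho v -> null_cone (identity_component G) rho v.
Proof.
move=> Nv d f d_pos _ f_homog f_inv.
have [GGL [G1 [GM _]]] := Gsub.
have [k [h [hG cosets]]] := identity_component_finite_index Gsub Gcl.
pose p i := f \mPo lin_subst (rho (h i)).
have p_coset g : G g -> exists2 i, (i < k)%N &
    forall w, veval f (rho g *m w) = veval (p i) w.
  move=> Gg; have [i ik G0y] := cosets g Gg; exists i => // w.
  have Gy : G (g *m invmx (h i)) by case: G0y => Z [ZG [_ [_ Zy]]]; exact: ZG.
  have Ghi := hG i ik.
  by rewrite veval_lin_subst -[in LHS](mulmxKV (GGL _ Ghi) g) rhoM // -mulmxA f_inv.
pose E (q1 q2 : {mpoly K[m]}) := forall w, veval q1 w = veval q2 w.
have [kk [t [tp pt t_distinct]]] :=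
  @representatives _ E [seq p i | i <- iota 0 k] (fun _ _ => erefl) (fun _ _ H w => esym (H w)).
have t_p j : exists2 i, (i < k)%N & tnth t j = p i.
  have /mapP [i] := tp j; rewrite mem_iota add0n => /andP [_ ik] ->.
  by exists i.
have t_stable g : G g -> forall j, exists j', forall w,
    veval (tnth t j) (rho g *m w) = veval (tnth t j') w.
  move=> Gg j; have [i ik ->] := t_p j; have Ghi := hG i ik.
  have [i' ik' Hi'] := p_coset _ (GM _ _ Ghi Gg).
  have [|j' Ej'] := pt (p i'); first by apply: map_f; rewrite mem_iota.
  by exists j' => w; rewrite veval_lin_subst mulmxA -rhoM // Hi' Ej'.
have t_homog j : tnth t j \is d.-homog.
  have [i _ ->] := t_p j; rewrite -[d]muln1; apply: comp_dhomog => //.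
  exact: lin_subst_homog.
have [i ik f_p] := p_coset _ G1.
have [|j Ej] := pt (p i); first by apply: map_f; rewrite mem_iota.
rewrite -[v]mul1mx -rho1 f_p Ej.
exact: (orbit_vanishes_on_null_cone rho_unit d_pos t_homog t_distinct t_stable Nv).
Qed.

End NullCone.

Theorem proposition7p6 (K : closedFieldType) (n m : nat) (G : mxset K n)
    (rho : 'M[K]_n -> 'M[K]_m) :
  is_reductive G -> is_rational_rep G rho ->
  forall sG sG0 : nat,
    is_sigma G rho sG -> is_sigma (identity_component G) rho sG0 ->
    (sG0 <= sG)%N.
Proof.
move=> [[Gsub Gcl] _] [rho_unit [rhoM _]] sG sG0 [cutG _] [_ minG0].
apply: minG0 => v; split => [zero_G0 | null_G0].
- apply: (null_cone_identity_component Gsub Gcl rho_unit rhoM); apply/cutG.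
  move=> d f d_pos dD f_homog f_inv; apply: (zero_G0 d f d_pos dD f_homog).
  by move=> g [Z [ZG [_ [_ Zg]]]] w; exact: f_inv (ZG g Zg) w.
- by move=> d f d_pos _ f_homog f_inv; exact: (null_G0 d f d_pos erefl f_homog).
Qed.
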